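(* Let $k\ge1$, $G=(V,E)$ an inductively $k$-independent graph with $k$-independence ordering $v_1,\dots,v_n$, $f:2^V\to\mathbb{R}_{\ge0}$ monotone submodular with $f(\emptyset)=0$, and $\beta>0$. Let $S_{\mathrm{end}}$ and $w_1,\dots,w_n$ be as produced by Phase 1 of algorithm PD-MON (described in the context), and let $\mathrm{OPT}=\max\{f(T):T\text{ independent in }G\}$. Then \[ \mathrm{OPT}\le f(S_{\mathrm{end}})+k(1+\beta)\sum_{i=1}^n w_i. \]
   Context: $N(v)$ is the neighbourhood of $v$ (excluding $v$); $G$ is inductively $k$-independent with $k$-independence ordering $v_1,\dots,v_n$ if for every $i$, $G[N(v_i)\cap\{v_i,\dots,v_n\}]$ has no independent set of size more than $k$. For $S\subseteq V$, $f_S(v)=f(S\cup\{v\})-f(S)$. Phase 1 of algorithm PD-MON (parameter $\beta>0$): start with $S=\emptyset$ and $w_1=\dots=w_n=0$. For $i=1,\dots,n$: let $C_i=N(v_i)\cap S$ for the current $S$; if $f_S(v_i)>(1+\beta)\sum_{v_j\in C_i}w_j$, set $w_i=f_S(v_i)-\sum_{v_j\in C_i}w_j$ (with $S$ the set before insertion) and add $v_i$ to $S$; otherwise leave $w_i=0$. $S_{\mathrm{end}}$ is $S$ at the end of this phase. *)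

(* Vertices v_1..v_n are the ordinals 'I_n, in their natural order. *)
From HB Require Import structures.
From mathcomp Require Import all_boot all_order all_algebra.
Set Implicit Arguments. Unset Strict Implicit. Unset Printing Implicit Defensive.
Import Order.TTheory GRing.Theory Num.Theory.
Local Open Scope ring_scope.

Definition simple_graph (n : nat) (e : rel 'I_n) : Prop :=
  (forall u, ~~ e u u) /\ (forall u v, e u v = e v u).

Definition independent (n : nat) (e : rel 'I_n) (T : {set 'I_n}) : bool :=
  [forall u in T, forall v in T, ~~ e u v].

Definition later_nbhd (n : nat) (e : rel 'I_n) (i : 'I_n) : {set 'I_n} :=
  [set j | e i j & (i <= j)%N].

(* the natural order v_1,...,v_n is a k-independence ordering *)
Definition inductively_k_independent (n k : nat) (e : rel 'I_n) : Prop :=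
  forall i : 'I_n, forall A : {set 'I_n},
    A \subset later_nbhd e i -> independent e A -> (#|A| <= k)%N.

Definition monotone_set_fun (R : realFieldType) (n : nat) (f : {set 'I_n} -> R) : Prop :=
  forall A B : {set 'I_n}, A \subset B -> f A <= f B.

Definition submodular (R : realFieldType) (n : nat) (f : {set 'I_n} -> R) : Prop :=
  forall A B : {set 'I_n}, f (A :|: B) + f (A :&: B) <= f A + f B.

Definition pdmon_step (R : realFieldType) (n : nat) (e : rel 'I_n)
  (f : {set 'I_n} -> R) (beta : R)
  (st : {set 'I_n} * {ffun 'I_n -> R}) (v : 'I_n) : {set 'I_n} * {ffun 'I_n -> R} :=
  let S := st.1 in let w := st.2 in
  let C := [set u in S | e v u] in
  let marg := f (v |: S) - f S in
  let sC := \sum_(u in C) w u in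
  if (1 + beta) * sC < marg
  then (v |: S, [ffun u => if u == v then marg - sC else w u])
  else (S, w).

Definition pdmon_phase1 (R : realFieldType) (n : nat) (e : rel 'I_n)
  (f : {set 'I_n} -> R) (beta : R) : {set 'I_n} * {ffun 'I_n -> R} :=
  foldl (pdmon_step e f beta) (set0, [ffun => 0]) (enum 'I_n).

(** Phase 1 maintains the invariant that every vertex v already
    scanned but rejected satisfies f_S(v) <= (1 + beta) * (total weight of the
    neighbours of v in S that precede v): at rejection time this is the
    rejection test, afterwards S only grows, which lowers f_S(v) by
    submodularity and leaves the weights of vertices preceding v untouched.
    For an independent T, submodularity gives
    f(T) <= f(S) + sum_(v in T) f_S(v), so by the invariant
    f(T) <= f(S) + (1 + beta) * sum_(v in T) sum_(u in S, u ~ v, u < v) w_u.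
    Exchanging the sums, each w_u is counted once for each v in T among the
    later neighbours of u; these form an independent subset of
    N(v_u) ∩ {v_u, ..., v_n}, so there are at most k of them. *)
From HB Require Import structures.
From mathcomp Require Import all_boot all_order all_algebra.
From mathcomp Require Import lra.
Set Implicit Arguments.
Unset Strict Implicit.
Unset Printing Implicit Defensive.
Import Order.TTheory GRing.Theory Num.Theory.
Local Open Scope ring_scope.

Definition marginal (R : realFieldType) (n : nat) (f : {set 'I_n} -> R)
    (S : {set 'I_n}) (v : 'I_n) : R :=
  f (v |: S) - f S.

Section Submodular.
Variables (R : realFieldType) (n : nat) (f : {set 'I_n} -> R).
Hypothesis f_mono : monotone_set_fun f.
Hypothesis f_subm : submodular f.

Lemma marginal_antitone (v : 'I_n) (A B : {set 'I_n}) :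
  A \subset B -> marginal f B v <= marginal f A v.
Proof.
rewrite /marginal => sAB; have := f_subm (v |: A) B.
have -> : (v |: A) :|: B = v |: B by rewrite -setUA (setUidPr sAB).
have : f A <= f ((v |: A) :&: B) by apply: f_mono; rewrite subsetI subsetUr sAB.
lra.
Qed.

Lemma submodular_union_le (A B : {set 'I_n}) :
  f (A :|: B) <= f A + \sum_(v in B) marginal f A v.
Proof.
rewrite -{1}[B]set_enum -big_enum; elim: (enum B) => [|a s IH].
  suff -> : [set x in [::]] = set0 :> {set 'I_n} by rewrite big_nil addr0 setU0.
  by apply/setP => x; rewrite !inE.
rewrite big_cons (_ : [set x in a :: s] = a |: [set x in s]); last first.
  by apply/setP => x; rewrite !inE.
rewrite setUCA; have := marginal_antitone a (subsetUl A [set x in s]).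
rewrite /marginal /= in IH *; lra.
Qed.

End Submodular.

Section BackWeight.
Variables (R : realFieldType) (n : nat) (e : rel 'I_n).

Definition back_weight (S : {set 'I_n}) (w : 'I_n -> R) (v : 'I_n) : R :=
  \sum_(u in S | e v u && (u < v)%N) w u.

Lemma independent_subset (A T : {set 'I_n}) :
  A \subset T -> independent e T -> independent e A.
Proof.
move=> /subsetP sAT /forall_inP indT; apply/forall_inP => x xA.
apply/forall_inP => y yA; exact: (forall_inP (indT x (sAT x xA)) y (sAT y yA)).
Qed.

Lemma sum_back_weight_le (k : nat) (S T : {set 'I_n}) (w : 'I_n -> R) :
  (forall u v, e u v = e v u) -> inductively_k_independent k e ->
  (forall u, 0 <= w u) -> independent e T ->
  \sum_(v in T) back_weight S w v <= k%:R * \sum_u w u.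
Proof.
move=> e_sym k_ind w_ge0 indT; rewrite /back_weight.
under eq_bigr => v _ do rewrite big_mkcond /=.
rewrite exchange_big mulr_sumr /=; apply: ler_sum => u _.
rewrite -big_mkcondr /=; case: (boolP (u \in S)) => uS; last first.
  by rewrite big_pred0 ?mulr_ge0 ?ler0n // => v; rewrite andbF.
pose L := [set v in T | e v u && (u < v)%N].
rewrite (eq_bigl (mem L)) => [|v]; last by rewrite !inE.
rewrite sumr_const -[w u *+ _]mulr_natl; apply: ler_wpM2r => //.
rewrite ler_nat; apply: (k_ind u).
  by apply/subsetP => v; rewrite !inE e_sym => /and3P [_ -> /ltnW ->].
by apply: independent_subset indT; apply/subsetP => v; rewrite inE => /andP [].
Qed.

End BackWeight.

Section Phase1.
Variables (R : realFieldType) (n : nat) (e : rel 'I_n) (f : {set 'I_n} -> R).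
Variable beta : R.
Hypothesis f_mono : monotone_set_fun f.
Hypothesis f_subm : submodular f.
Hypothesis beta_gt0 : 0 < beta.
Implicit Types (S : {set 'I_n}) (w : {ffun 'I_n -> R}) (v x : 'I_n).

Local Notation step := (pdmon_step e f beta).
Local Notation bw := (back_weight e).
Local Notation p1 := (pdmon_phase1 e f beta).

Lemma pdmon_step_sub S w v : S \subset (step (S, w) v).1.
Proof. by rewrite /pdmon_step; case: ifP => _ //=; apply: subsetUr. Qed.

Lemma pdmon_step_subU1 S w v : (step (S, w) v).1 \subset v |: S.
Proof. by rewrite /pdmon_step; case: ifP => _ //=; apply: subsetUr. Qed.

Lemma pdmon_step_weight_ge0 S w v :
  (forall u, 0 <= w u) -> forall u, 0 <= (step (S, w) v).2 u.
Proof.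
move=> w_ge0 u; rewrite /pdmon_step; case: ifP => //= accept.
rewrite ffunE; case: eqP => // _.
have : 0 <= beta * \sum_(u in [set u in S | e v u]) w u.
  by apply: mulr_ge0; [exact: ltW | apply: sumr_ge0].
move: accept; rewrite mulrDl mul1r; lra.
Qed.

Lemma pdmon_step_reject S w v : v \notin (step (S, w) v).1 ->
  marginal f S v <= (1 + beta) * \sum_(u in [set u in S | e v u]) w u.
Proof.
rewrite /pdmon_step; case: ifP => [_|/negbT]; first by rewrite /= setU11.
by rewrite -leNgt.
Qed.

Lemma back_weight_step S w v x :
  {in S, forall u : 'I_n, (u < v)%N} -> (x <= v)%N ->
  bw (step (S, w) v).1 (step (S, w) v).2 x = bw S w x.
Proof.
move=> S_lt x_le; rewrite /pdmon_step; case: ifP => //= _.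
apply: eq_big => [u|u /andP [_ /andP [_ ux]]]; last first.
  by rewrite ffunE; case: eqP => // uv; move: ux; rewrite uv ltnNge x_le.
rewrite in_setU1; case: eqP => //= ->.
by rewrite ltnNge x_le !andbF; case: (v \in S).
Qed.

Lemma back_weight_prefix S w v : {in S, forall u : 'I_n, (u < v)%N} ->
  \sum_(u in [set u in S | e v u]) w u = bw S w v.
Proof.
move=> S_lt; apply: eq_bigl => u; rewrite inE.
by case: (boolP (u \in S)) => //= /S_lt ->; rewrite andbT.
Qed.

Definition pdmon_prefix m :=
  foldl step (set0, [ffun => 0]) (take m (enum 'I_n)).

Lemma pdmon_prefixS m (m_lt : (m < n)%N) :
  pdmon_prefix m.+1 = step (pdmon_prefix m) (Ordinal m_lt).
Proof.
rewrite /pdmon_prefix (take_nth (Ordinal m_lt)) ?size_enum_ord // foldl_rcons.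
by congr (step _ _); apply: val_inj; rewrite /= nth_enum_ord.
Qed.

Lemma pdmon_prefix_full : pdmon_prefix n = pdmon_phase1 e f beta.
Proof. by rewrite /pdmon_prefix take_oversize ?size_enum_ord. Qed.

Definition phase1_inv m (p : {set 'I_n} * {ffun 'I_n -> R}) : Prop :=
  [/\ forall u, 0 <= p.2 u, {in p.1, forall u : 'I_n, (u < m)%N} &
      forall v : 'I_n, (v < m)%N -> v \notin p.1 ->
        marginal f p.1 v <= (1 + beta) * bw p.1 p.2 v].

Lemma phase1_inv_step m (m_lt : (m < n)%N) p :
  phase1_inv m p -> phase1_inv m.+1 (step p (Ordinal m_lt)).
Proof.
case: p => S w [w_ge0 S_lt rejected]; set v := Ordinal m_lt.
have sub := pdmon_step_sub S w v.
split=> [|u|x x_le x_notin].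
- exact: pdmon_step_weight_ge0.
- move/(subsetP (pdmon_step_subU1 S w v)); rewrite in_setU1.
  by case/predU1P => [->//|/S_lt /ltnW].
have x_notinS : x \notin S by apply: contra x_notin; apply: (subsetP sub).
apply: le_trans (marginal_antitone f_mono f_subm x sub) _.
rewrite back_weight_step //; move: x_le; rewrite ltnS leq_eqVlt.
case/predU1P => [x_eq | x_lt]; last exact: rejected.
have x_v : x = v by apply: val_inj.
rewrite -back_weight_prefix x_v //; apply: pdmon_step_reject.
by move: x_notin; rewrite x_v.
Qed.

Lemma phase1_inv_prefix m : (m <= n)%N -> phase1_inv m (pdmon_prefix m).
Proof.
elim: m => [_ | m IH m_lt].
  by rewrite /pdmon_prefix take0; split=> [u|u|v]; rewrite ?ffunE ?inE.
by rewrite pdmon_prefixS; apply/phase1_inv_step/IH/ltnW.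
Qed.

Lemma pdmon_phase1_weight_ge0 u : 0 <= p1.2 u.
Proof. by rewrite -pdmon_prefix_full; case: (phase1_inv_prefix (leqnn n)). Qed.

Lemma pdmon_phase1_marginal_le v :
  marginal f p1.1 v <= (1 + beta) * bw p1.1 p1.2 v.
Proof.
case: (boolP (v \in p1.1)) => [v_in | v_notin].
  rewrite /marginal (setUidPr _) ?sub1set // subrr mulr_ge0 //.
    by rewrite addr_ge0 ?ltW.
  by apply: sumr_ge0 => u _; apply: pdmon_phase1_weight_ge0.
move: v_notin; rewrite -pdmon_prefix_full.
by case: (phase1_inv_prefix (leqnn n)) => _ _; apply.
Qed.

End Phase1.

Theorem corollary1 (R : realFieldType) (n k : nat) (e : rel 'I_n)
  (f : {set 'I_n} -> R) (beta : R) :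
  (1 <= k)%N ->
  simple_graph e ->
  inductively_k_independent k e ->
  (forall A, 0 <= f A) -> monotone_set_fun f -> submodular f -> f set0 = 0 ->
  0 < beta ->
  forall T : {set 'I_n}, independent e T ->
    f T <= f (pdmon_phase1 e f beta).1
           + k%:R * (1 + beta) * \sum_(i < n) (pdmon_phase1 e f beta).2 i.
Proof.
move=> _ [_ e_sym] k_ind _ f_mono f_subm _ beta_gt0 T indT.
set S := (pdmon_phase1 e f beta).1; set w := (pdmon_phase1 e f beta).2.
have w_ge0 u : 0 <= w u by apply: pdmon_phase1_weight_ge0.
have union_le := submodular_union_le f_mono f_subm S T.
have greedy : \sum_(v in T) marginal f S v
              <= (1 + beta) * \sum_(v in T) back_weight e S w v.
  by rewrite mulr_sumr; apply: ler_sum => v _; apply: pdmon_phase1_marginal_le.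
have charge := sum_back_weight_le S e_sym k_ind w_ge0 indT.
have beta1_ge0 : 0 <= 1 + beta by lra.
have := ler_wpM2l beta1_ge0 charge; rewrite -mulrA [k%:R * _]mulrC.
have := f_mono _ _ (subsetUr S T); lra.
Qed.
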